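(* A clone $\tau$-algebra $\mathbf C$ is minimal if and only if $\mathbf C$ is isomorphic to the clone $\mathcal V$-algebra $\mathbf{Cl}(\mathcal V)$ for some variety $\mathcal V$ of $\tau$-algebras.
   Context: A clone $\tau$-algebra is an algebra $\mathbf C=(C,\sigma^{\mathbf C}\ (\sigma\in\tau),q_n^{\mathbf C}\ (n\ge0),\mathsf e_i^{\mathbf C}\ (i\ge1))$ with $\mathsf e_i$ nullary, $q_n$ of arity $n+1$, satisfying: (C1) $q_n(\mathsf e_i,x_1,\dots,x_n)=x_i$ ($1\le i\le n$); (C2) $q_n(\mathsf e_j,x_1,\dots,x_n)=\mathsf e_j$ ($j>n$); (C3) $q_n(x,\mathsf e_1,\dots,\mathsf e_n)=x$; (C4) $q_k(x,y_1,\dots,y_k)=q_n(x,y_1,\dots,y_k,\mathsf e_{k+1},\dots,\mathsf e_n)$ ($n>k$); (C5) $q_n(q_n(x,\mathbf y),\mathbf z)=q_n(x,q_n(y_1,\mathbf z),\dots,q_n(y_n,\mathbf z))$; (C6) $q_n(\sigma(x_1,\dots,x_k),\mathbf y)=\sigma(q_n(x_1,\mathbf y),\dots,q_n(x_k,\mathbf y))$ for $\sigma\in\tau$ of arity $k$. $\mathbf C$ is minimal if $C$ equals the smallest subset of $C$ containing all $\mathsf e_i^{\mathbf C}$ and closed under the operations $\sigma^{\mathbf C}$ ($\sigma\in\tau$). For a variety $\mathcal V$ of $\tau$-algebras with free algebra $\mathbf F_{\mathcal V}$ over $\{v_1,v_2,\dots\}$, the clone $\mathcal V$-algebra $\mathbf{Cl}(\mathcal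 V)=(\mathbf F_{\mathcal V},q_n^{\mathbf F},\mathsf e_i^{\mathbf F})$ has $\mathsf e_i^{\mathbf F}=v_i$ and $q_n^{\mathbf F}(a,b_1,\dots,b_n)=s(a)$, where $s$ is the unique endomorphism of $\mathbf F_{\mathcal V}$ with $s(v_i)=b_i$ for $i\le n$ and $s(v_i)=v_i$ for $i>n$. *)

From mathcomp Require Import all_boot.
From Stdlib Require Import ClassicalEpsilon.
Set Implicit Arguments. Unset Strict Implicit. Unset Printing Implicit Defensive.

Section CloneAlgebras.
Variable sym : Type.
Variable ar : sym -> nat.

(* Convention: indices are 0-based.  The nullary constant [ce C i]
   (i : nat) stands for the paper's e_{i+1}, and the variable [Var i]
   for v_{i+1}. *)
Record clone_alg := CloneAlg {
  ccar :> Type;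
  cop : forall s : sym, ('I_(ar s) -> ccar) -> ccar;
  cq : forall n : nat, ccar -> ('I_n -> ccar) -> ccar;
  ce : nat -> ccar }.

Definition pad (C : clone_alg) (k n : nat) (y : 'I_k -> C) (i : 'I_n) : C :=
  match (insub (val i) : option 'I_k) with
  | Some j => y j
  | None => ce C i
  end.

Definition is_clone_alg (C : clone_alg) : Prop :=
  (forall n (y : 'I_n -> C) (i : 'I_n), @cq C n (ce C i) y = y i) /\
      (forall n (y : 'I_n -> C) (j : nat), n <= j -> @cq C n (ce C j) y = ce C j) /\
      (forall n (x : C), @cq C n x (fun i : 'I_n => ce C i) = x) /\
      (forall k n (x : C) (y : 'I_k -> C), k < n -> @cq C k x y = @cq C n x (@pad C k n y)) /\
      (forall n (x : C) (y z : 'I_n -> C),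
                  @cq C n (@cq C n x y) z = @cq C n x (fun i => @cq C n (y i) z)) /\
      (forall (s : sym) n (xs : 'I_(ar s) -> C) (y : 'I_n -> C),
                  @cq C n (@cop C s xs) y = @cop C s (fun j => @cq C n (xs j) y)).

Definition minimal (C : clone_alg) : Prop :=
  forall P : C -> Prop,
    (forall i, P (ce C i)) ->
    (forall (s : sym) (xs : 'I_(ar s) -> C), (forall j, P (xs j)) -> P (@cop C s xs)) ->
    forall c : C, P c.

Definition clone_iso (C D : clone_alg) : Prop :=
  exists f : C -> D,
    [/\ bijective f,
        (forall (s : sym) (xs : 'I_(ar s) -> C), f (@cop C s xs) = @cop D s (fun j => f (xs j))),
        (forall n (x : C) (y : 'I_n -> C), f (@cq C n x y) = @cq D n (f x) (fun i => f (y i))) &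
        (forall i, f (ce C i) = ce D i)].

Inductive term : Type :=
  | Var of nat
  | App (s : sym) of ('I_(ar s) -> term).

Record alg := Alg {
  acar :> Type;
  aop : forall s : sym, ('I_(ar s) -> acar) -> acar }.

Fixpoint eval (A : alg) (v : nat -> A) (t : term) : A :=
  match t with
  | Var i => v i
  | App s ts => @aop A s (fun j => eval v (ts j))
  end.

Definition satisfies (A : alg) (Sigma : term -> term -> Prop) : Prop :=
  forall s t, Sigma s t -> forall v : nat -> A, eval v s = eval v t.

Definition is_variety (V : alg -> Prop) : Prop :=
  exists Sigma : term -> term -> Prop, forall A : alg, V A <-> satisfies A Sigma.

Definition veq (V : alg -> Prop) (s t : term) : Prop :=
  forall A : alg, V A -> forall v : nat -> A, eval v s = eval v t.

Fixpoint subst (f : nat -> term) (t : term) : term :=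
  match t with
  | Var i => f i
  | App s ts => @App s (fun j => subst f (ts j))
  end.

(* The free algebra F_V over {v_0, v_1, ...}: terms modulo the identities
   of V, represented as equivalence classes (predicates on terms). *)
Definition cls (V : alg -> Prop) (t : term) : term -> Prop := fun s => veq V s t.
Definition Fcar (V : alg -> Prop) : Type := {P : term -> Prop | exists t, P = cls V t}.
Definition Fin (V : alg -> Prop) (t : term) : Fcar V :=
  exist _ (cls V t) (ex_intro _ t erefl).
Definition rep (V : alg -> Prop) (a : Fcar V) : term :=
  proj1_sig (constructive_indefinite_description _ (proj2_sig a)).

Definition Fop (V : alg -> Prop) (s : sym) (xs : 'I_(ar s) -> Fcar V) : Fcar V :=
  Fin V (@App s (fun j => rep (xs j))).
Definition Fe (V : alg -> Prop) (i : nat) : Fcar V := Fin V (Var i).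
(* q_n(a, b_0..b_{n-1}) = s(a), s the endomorphism of F_V induced by
   v_i |-> b_i (i < n), v_i |-> v_i (i >= n). *)
Definition Fq (V : alg -> Prop) (n : nat) (a : Fcar V) (b : 'I_n -> Fcar V) : Fcar V :=
  Fin V (subst (fun i => match (insub i : option 'I_n) with
                         | Some j => rep (b j)
                         | None => Var i
                         end) (rep a)).

Definition Cl (V : alg -> Prop) : clone_alg := @CloneAlg (Fcar V) (@Fop V) (@Fq V) (@Fe V).

End CloneAlgebras.

(* Reading the variable v_i as e_i, every tau-term t has a value [tval C t]
   in C.  Axioms C1, C2 and C6 (the only ones needed) make [tval] turn
   substitution into q_n, and make the value of t under an assignment w equal
   to q_m(tval t, w_0, ..., w_(m-1)) once m bounds the variables of t.  Hence
   the identities of C are exactly the kernel of [tval]; for the variety V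
   they axiomatise, [tval] induces an injective clone homomorphism Cl(V) -> C
   whose image is the closure of the e_i under the operations, so it is onto
   exactly when C is minimal.  Conversely Cl(V) is minimal since every term is
   built from variables by the operations. *)
From Stdlib Require Import ClassicalEpsilon FunctionalExtensionality.
From Stdlib Require Import PropExtensionality ProofIrrelevance.
From mathcomp Require Import all_boot.
Set Implicit Arguments. Unset Strict Implicit. Unset Printing Implicit Defensive.

Section CloneAlgebraTheory.
Context {sym : Type} {ar : sym -> nat}.

Section FreeAlgebra.
Variable V : alg ar -> Prop.

Lemma veq_sym s t : veq V s t -> veq V t s.
Proof. by move=> Est A VA v; rewrite Est. Qed.

Lemma veq_trans s t u : veq V s t -> veq V t u -> veq V s u.
Proof. by move=> Est Etu A VA v; rewrite Est // Etu. Qed.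

Lemma veq_App s (ts us : 'I_(ar s) -> term ar) :
  (forall j, veq V (ts j) (us j)) -> veq V (App ts) (App us).
Proof.
move=> Etu A VA v /=; congr aop; apply: functional_extensionality => j.
exact: Etu.
Qed.

Lemma Fin_eq s t : veq V s t -> Fin V s = Fin V t.
Proof.
move=> Est; apply: subset_eq_compat; apply: functional_extensionality => u.
apply: propositional_extensionality; rewrite /cls.
by split=> Eu; [apply: veq_trans Eu Est | apply: veq_trans Eu (veq_sym Est)].
Qed.

Lemma Fin_inj s t : Fin V s = Fin V t -> veq V s t.
Proof.
move/(f_equal (@proj1_sig _ _)) => /= Est.
have : cls V s s by [].
by rewrite Est.
Qed.

Lemma repK (a : Fcar V) : Fin V (rep a) = a.
Proof.
rewrite /rep; case: constructive_indefinite_description => t /= Et.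
by case: a Et => P Pt /= Et; apply: subset_eq_compat.
Qed.

Lemma rep_Fin t : veq V (rep (Fin V t)) t.
Proof. by apply: Fin_inj; rewrite repK. Qed.

Lemma Cl_minimal : minimal (Cl V).
Proof.
move=> P Pe Pop a; rewrite -(repK a); elim: (rep a) => [i | s ts IH].
  exact: Pe.
have := Pop s (fun j => Fin V (ts j)) IH; rewrite /= /Fop.
by congr P; apply/Fin_eq/veq_App => j; apply: rep_Fin.
Qed.

End FreeAlgebra.

Lemma clone_iso_minimal (C D : clone_alg ar) :
  clone_iso C D -> minimal D -> minimal C.
Proof.
case=> f [[g fK gK] f_op _ f_e] minD P Pe Pop c.
rewrite -(fK c); apply: (minD (fun d => P (g d))) => [i | s xs IH].
  by rewrite -f_e fK.
have -> : xs = (fun j => f (g (xs j))).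
  by apply: functional_extensionality => j; rewrite gK.
by rewrite -f_op fK; apply: Pop.
Qed.

Fixpoint var_bound (t : term ar) : nat :=
  match t with
  | Var i => i.+1
  | App s ts => \max_(j < ar s) var_bound (ts j)
  end.

Section TermValues.
Variable C : clone_alg ar.

Definition clone_reduct : alg ar := Alg (@cop _ ar C).

Definition tval (t : term ar) : C := eval (A := clone_reduct) (ce C) t.

Lemma tval_surj : minimal C -> forall c : C, exists t, tval t = c.
Proof.
move=> minC; apply: minC => [i | s xs IH]; first by exists (Var ar i).
have [ts Ets] := choice _ IH.
exists (App ts); rewrite /tval /=; congr cop.
exact: functional_extensionality.
Qed.

Hypothesis C1 : forall n (y : 'I_n -> C) (i : 'I_n), cq (ce C i) y = y i.
Hypothesis C2 : forall n (y : 'I_n -> C) (j : nat), n <= j -> cq (ce C j) y = ce C j.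
Hypothesis C6 : forall (s : sym) n (xs : 'I_(ar s) -> C) (y : 'I_n -> C),
  cq (cop xs) y = cop (fun j => cq (xs j) y).

Lemma eval_cq_tval t m (w : nat -> C) : var_bound t <= m ->
  eval (A := clone_reduct) w t = cq (tval t) (fun i : 'I_m => w i).
Proof.
elim: t => [i | s ts IH] /= bound_t.
  by rewrite /tval /= (C1 _ (Ordinal bound_t)).
rewrite /tval /= C6; congr cop; apply: functional_extensionality => j.
apply/IH/leq_trans/bound_t.
exact: (leq_bigmax_cond (F := fun j => var_bound (ts j))).
Qed.

Lemma tval_subst n (sg : nat -> term ar) : (forall i, n <= i -> sg i = Var ar i) ->
  forall t, tval (subst sg t) = cq (tval t) (fun i : 'I_n => tval (sg i)).
Proof.
move=> sg_id; elim=> [i | s ts IH].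
  case: (ltnP i n) => [lt_in | le_ni]; first by rewrite /= (C1 _ (Ordinal lt_in)).
  by rewrite /= sg_id // /tval /= C2.
rewrite /tval /= C6; congr cop; apply: functional_extensionality => j; exact: IH.
Qed.

Definition tval_ker (s t : term ar) : Prop := tval s = tval t.

Definition tval_variety (A : alg ar) : Prop := satisfies A tval_ker.

Lemma tval_variety_reduct : tval_variety clone_reduct.
Proof.
move=> s t Est w; pose m := maxn (var_bound s) (var_bound t).
by rewrite (@eval_cq_tval s m) ?leq_maxl // (@eval_cq_tval t m) ?leq_maxr // Est.
Qed.

Lemma veq_tval_variety s t : veq tval_variety s t <-> tval s = tval t.
Proof.
split=> [Est | Est A VA v]; last exact: VA.
exact: Est _ tval_variety_reduct (ce C).
Qed.

Lemma Fin_tval_variety s t : Fin tval_variety s = Fin tval_variety t <-> tval s = tval t.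
Proof.
rewrite -veq_tval_variety.
by split; [apply: Fin_inj | apply: Fin_eq].
Qed.

Lemma tval_rep t : tval (rep (Fin tval_variety t)) = tval t.
Proof. by apply/veq_tval_variety/rep_Fin. Qed.

Lemma clone_iso_Cl_tval_variety : minimal C -> clone_iso C (Cl tval_variety).
Proof.
move=> /tval_surj /(choice _) [sec secK].
pose f c := Fin tval_variety (sec c).
have f_tval t : f (tval t) = Fin tval_variety t by apply/Fin_tval_variety.
have fK c : tval (rep (f c)) = c by rewrite tval_rep.
exists f; split.
- exists (fun a => tval (rep a)) => // a.
  by rewrite f_tval repK.
- move=> s xs; rewrite /= /Fop -f_tval /tval /=; congr (f (cop _)).
  by apply: functional_extensionality => j; rewrite -[LHS]fK.
- move=> n x y; rewrite /= /Fq -f_tval (tval_subst (n := n)) => [|i le_ni]; last first.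
    by case: insubP => // j; rewrite ltnNge le_ni.
  rewrite fK; congr (f (cq _ _)); apply: functional_extensionality => i.
  by rewrite valK fK.
- by move=> i; rewrite /= /Fe -f_tval.
Qed.

End TermValues.
End CloneAlgebraTheory.

Theorem corollary11p9 (sym : Type) (ar : sym -> nat) (C : clone_alg ar) :
  is_clone_alg C ->
  (minimal C <-> exists V : alg ar -> Prop, is_variety V /\ clone_iso C (Cl V)).
Proof.
case=> C1 [C2 [_ [_ [_ C6]]]]; split=> [minC | [V [_ isoCV]]].
- exists (tval_variety C); split; first by exists (tval_ker C).
  exact: clone_iso_Cl_tval_variety.
- exact: (clone_iso_minimal isoCV (Cl_minimal (V := V))).
Qed.
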